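(* For all integers $n>1$, $$c_{\mathbb{Z}^2}(n)=c_{TS}(n,2)=c_{LS}(n,2)=\lfloor 2n-2\sqrt{n}\rfloor .$$
   Context: A packing of disks in $\mathbb{E}^2$ is a family of disks with pairwise disjoint interiors. A packing is totally separable (a TS-packing) if any two of its disks can be separated by a line disjoint from the interior of every disk of the packing. A packing $\mathcal{P}$ is locally separable (an LS-packing) if each disk of $\mathcal{P}$ together with the disks of $\mathcal{P}$ tangent to it form a TS-packing. The contact number $c(\mathcal{P})$ is the number of unordered pairs of tangent disks of $\mathcal{P}$. $c_{TS}(n,2)$ (resp. $c_{LS}(n,2)$) denotes the largest contact number of a TS-packing (resp. LS-packing) of $n$ congruent disks in $\mathbb{E}^2$. $c_{\mathbb{Z}^2}(n)$ denotes the largest contact number of a packing of $n$ disks of diameter $1$ whose centers are distinct points of the integer lattice $\mathbb{Z}^2$. *)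

From HB Require Import structures.
From mathcomp Require Import all_boot all_order all_algebra.
From mathcomp Require Import all_classical all_reals.
Set Implicit Arguments. Unset Strict Implicit. Unset Printing Implicit Defensive.
Import Order.TTheory GRing.Theory Num.Theory.
Local Open Scope ring_scope.
Local Open Scope classical_set_scope.

Section Disks.
Variable R : realType.
Notation P2 := (R * R)%type.

Definition cdisk (c : P2) (r : R) : set P2 :=
  [set x | (x.1 - c.1) ^+ 2 + (x.2 - c.2) ^+ 2 <= r ^+ 2].
Definition odisk (c : P2) (r : R) : set P2 :=
  [set x | (x.1 - c.1) ^+ 2 + (x.2 - c.2) ^+ 2 < r ^+ 2].

Definition lin (a : P2) (x : P2) : R := a.1 * x.1 + a.2 * x.2.
Definition line (a : P2) (b : R) : set P2 := [set x | lin a x = b].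

(* A family of n congruent disks of radius r with centers c i (i < n). *)
Definition packing (n : nat) (r : R) (c : 'I_n -> P2) : Prop :=
  0 < r /\ forall i j : 'I_n, i != j -> odisk (c i) r `&` odisk (c j) r = set0.

Definition tangent (n : nat) (r : R) (c : 'I_n -> P2) (i j : 'I_n) : Prop :=
  i != j /\ cdisk (c i) r `&` cdisk (c j) r !=set0.

Definition TS_on (n : nat) (r : R) (c : 'I_n -> P2) (S : set 'I_n) : Prop :=
  forall i j, S i -> S j -> i != j ->
    exists (a : P2) (b : R), a != (0, 0) /\
      (forall x, cdisk (c i) r x -> lin a x <= b) /\
      (forall x, cdisk (c j) r x -> b <= lin a x) /\
      (forall k, S k -> line a b `&` odisk (c k) r = set0).

Definition TS_packing (n : nat) (r : R) (c : 'I_n -> P2) : Prop :=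
  packing r c /\ TS_on r c setT.

Definition LS_packing (n : nat) (r : R) (c : 'I_n -> P2) : Prop :=
  packing r c /\
  forall i : 'I_n, TS_on r c ([set i] `|` [set j | tangent r c i j]).

Definition Z2_packing (n : nat) (r : R) (c : 'I_n -> P2) : Prop :=
  r = 2^-1 /\ packing r c /\ injective c /\
  forall i, exists z1 z2 : int, c i = (z1%:~R, z2%:~R).

Definition contact_number (n : nat) (r : R) (c : 'I_n -> P2) : nat :=
  #|[pred p : 'I_n * 'I_n | (p.1 < p.2)%N && `[< tangent r c p.1 p.2 >]]|.

Definition largest_contact (n : nat) (Pk : R -> ('I_n -> P2) -> Prop) (k : int) : Prop :=
  (exists r c, Pk r c /\ (contact_number r c)%:Z = k) /\
  (forall r c, Pk r c -> ((contact_number r c)%:Z <= k)%R).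

End Disks.

(* An LS-packing has "obtuse neighbourhoods": two disks tangent to a disk D
   subtend a non-acute angle at its center.  Indeed D lies on one side of a
   line separating them that avoids its interior, so the disk on the other side
   touches D exactly where the line does, and the third disk lies beyond it.
   Cut the nonzero directions into two opposite pairs of half-open quadrants,
   "horizontal" and "vertical".  Vectors in one quadrant make acute angles, so
   every disk has at most one neighbour in each quadrant direction and is that
   neighbour for at most one disk: the horizontal contacts form monotone
   paths, and so do the vertical ones.  With a horizontal and b vertical path
   ends there are at most (n - a) + (n - b) contacts, while a horizontal and a
   vertical path meet in at most one disk, so n <= ab and the contact number is
   at most 2n - a - b <= 2n - 2 sqrt n.  Z^2-packings are TS-packings, which
   are LS-packings, and a w x h block of lattice points with w = ceil(sqrt n)
   and h in {w - 1, w} attains the bound. *)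

From HB Require Import structures.
From mathcomp Require Import all_boot all_order all_algebra.
From mathcomp Require Import all_classical all_reals.
From mathcomp Require Import ring lra zify.
Import Order.TTheory GRing.Theory Num.Theory.
Local Open Scope ring_scope.
Set Implicit Arguments. Unset Strict Implicit. Unset Printing Implicit Defensive.

Section PlaneGeometry.
Variable R : realType.
Local Open Scope classical_set_scope.
Implicit Types (a p q u v x y : R * R) (r s b : R).

Definition vsub x y : R * R := (x.1 - y.1, x.2 - y.2).
Definition vneg v : R * R := (- v.1, - v.2).
Definition norm2 v : R := v.1 ^+ 2 + v.2 ^+ 2.

Lemma norm2_ge0 v : 0 <= norm2 v.
Proof. by rewrite addr_ge0 ?sqr_ge0. Qed.

Lemma norm2_gt0 v : v != (0, 0) -> 0 < norm2 v.
Proof.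
move=> nz; rewrite lt_def norm2_ge0 andbT paddr_eq0 ?sqr_ge0 //.
rewrite !sqrf_eq0; apply: contra nz => /andP[/eqP e1 /eqP e2].
by rewrite [v]surjective_pairing e1 e2.
Qed.

Lemma norm2_vneg v : norm2 (vneg v) = norm2 v.
Proof. by rewrite /norm2 /= !sqrrN. Qed.

Lemma lin_vneg a x : lin (vneg a) x = - lin a x.
Proof. by rewrite /lin /=; ring. Qed.

Lemma linC x y : lin x y = lin y x.
Proof. by rewrite /lin mulrC [x.2 * _]mulrC. Qed.

Lemma lin_vsub a x y : lin a (vsub x y) = lin a x - lin a y.
Proof. by rewrite /lin /=; ring. Qed.

Lemma vsub_eq0 x y : (vsub x y == (0, 0)) = (x == y).
Proof.
by case: x y => x1 x2 [y1 y2]; rewrite /vsub !xpair_eqE /= !subr_eq0.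
Qed.

Lemma vsubC x y : vsub x y = vneg (vsub y x).
Proof. by rewrite /vsub /vneg /=; congr pair; ring. Qed.

Lemma cdiskE c r x : cdisk c r x = (norm2 (vsub x c) <= r ^+ 2).
Proof. by []. Qed.

Lemma odiskE c r x : odisk c r x = (norm2 (vsub x c) < r ^+ 2).
Proof. by []. Qed.

Lemma sqr_half : (2^-1 : R) ^+ 2 = 4^-1.
Proof. by rewrite exprVn; congr (_^-1); ring. Qed.

Lemma norm2_vsub_le x y z :
  norm2 (vsub x y) <= 2 * norm2 (vsub z x) + 2 * norm2 (vsub z y).
Proof.
rewrite -subr_ge0 /norm2 /=.
have -> : 2 * ((z.1 - x.1) ^+ 2 + (z.2 - x.2) ^+ 2) +
    2 * ((z.1 - y.1) ^+ 2 + (z.2 - y.2) ^+ 2) -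
    ((x.1 - y.1) ^+ 2 + (x.2 - y.2) ^+ 2) =
    (2 * z.1 - x.1 - y.1) ^+ 2 + (2 * z.2 - x.2 - y.2) ^+ 2 by ring.
by rewrite addr_ge0 ?sqr_ge0.
Qed.

(* Equality case of Cauchy-Schwarz: [p] is forced to be [-(2 r / s) a]. *)
Lemma antiparallel_of_extremal a p q s r : 0 <= r -> 0 < s -> s ^+ 2 = norm2 a ->
  norm2 p <= (2 * r) ^+ 2 -> lin a p <= - 2 * r * s ->
  s * lin p q = - 2 * r * lin a q.
Proof.
move=> r0 s0 sE hp hap.
set d1 := s * p.1 + 2 * r * a.1; set d2 := s * p.2 + 2 * r * a.2.
have hd : d1 ^+ 2 + d2 ^+ 2 <= 0.
  have -> : d1 ^+ 2 + d2 ^+ 2 = s ^+ 2 * norm2 p + 4 * r * s * lin a p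
                               + 4 * r ^+ 2 * norm2 a.
    by rewrite /d1 /d2 /norm2 /lin; ring.
  rewrite -sE.
  have : s ^+ 2 * norm2 p <= s ^+ 2 * (2 * r) ^+ 2 by rewrite ler_wpM2l ?sqr_ge0.
  have : 4 * r * s * lin a p <= 4 * r * s * (- 2 * r * s).
    by rewrite ler_wpM2l // !mulr_ge0 // ltW.
  nra.
have [e1 e2] : s * p.1 = - 2 * r * a.1 /\ s * p.2 = - 2 * r * a.2.
  suff [] : d1 = 0 /\ d2 = 0 by rewrite /d1 /d2; lra.
  by split; apply/eqP; rewrite -sqrf_eq0 eq_le sqr_ge0 andbT;
    have := sqr_ge0 d1; have := sqr_ge0 d2; lra.
by rewrite /lin mulrDr !mulrA e1 e2; ring.
Qed.

Lemma disk_below_line a c r b : a != (0, 0) ->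
  (forall x, cdisk c r x -> lin a x <= b) -> lin a c + r * Num.sqrt (norm2 a) <= b.
Proof.
move=> a0 hb; set s := Num.sqrt (norm2 a).
have s0 : 0 < s by rewrite sqrtr_gt0 norm2_gt0.
have sE : s ^+ 2 = norm2 a by rewrite sqr_sqrtr // norm2_ge0.
pose x := (c.1 + r / s * a.1, c.2 + r / s * a.2).
have xc : norm2 (vsub x c) = r ^+ 2.
  have -> : norm2 (vsub x c) = (r / s) ^+ 2 * s ^+ 2 by rewrite sE /norm2 /=; ring.
  by field; rewrite gt_eqF.
have /hb : cdisk c r x by rewrite cdiskE xc.
have -> : lin a x = lin a c + r / s * s ^+ 2 by rewrite sE /lin /norm2 /=; ring.
by rewrite expr2 mulrA divfK // gt_eqF.
Qed.

Lemma disk_above_line a c r b : a != (0, 0) ->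
  (forall x, cdisk c r x -> b <= lin a x) -> b + r * Num.sqrt (norm2 a) <= lin a c.
Proof.
move=> a0 hb.
have na0 : vneg a != (0, 0) by apply: contra a0; rewrite !xpair_eqE !oppr_eq0.
suff : - lin a c + r * Num.sqrt (norm2 a) <= - b by lra.
rewrite -lin_vneg -(norm2_vneg a); apply: disk_below_line na0 _ => x /hb.
by rewrite lin_vneg lerN2.
Qed.

Lemma line_avoids_disk a c r b : a != (0, 0) -> 0 <= r ->
  line a b `&` odisk c r = set0 -> r * Num.sqrt (norm2 a) <= `|lin a c - b|.
Proof.
move=> a0 r0 hl; set s := Num.sqrt (norm2 a).
have s0 : 0 < s by rewrite sqrtr_gt0 norm2_gt0.
have sE : s ^+ 2 = norm2 a by rewrite sqr_sqrtr // norm2_ge0.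
rewrite leNgt; apply/negP => hlt.
pose t := (b - lin a c) / s ^+ 2; pose x := (c.1 + t * a.1, c.2 + t * a.2).
suff : (line a b `&` odisk c r) x by rewrite hl.
split.
  rewrite /line /x /t /lin /=; rewrite sE /norm2; field.
  by rewrite -/(norm2 a) gt_eqF // norm2_gt0.
rewrite odiskE; have -> : norm2 (vsub x c) = `|lin a c - b| ^+ 2 / s ^+ 2.
  rewrite real_normK ?num_real // /x /t sE /norm2 /=; field.
  by rewrite -/(norm2 a) gt_eqF // norm2_gt0.
by rewrite ltr_pdivrMr ?exprn_gt0 // -exprMn ltrXn2r.
Qed.

Lemma line_vneg a b : line (vneg a) (- b) = line a b.
Proof.
rewrite /line; apply/seteqP; split => x /=; rewrite lin_vneg; first exact: oppr_inj.
by move->.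
Qed.

Lemma separated_nbhd_obtuse ci cj ck r a b : 0 < r -> a != (0, 0) ->
  norm2 (vsub cj ci) <= (2 * r) ^+ 2 -> norm2 (vsub ck ci) <= (2 * r) ^+ 2 ->
  (forall x, cdisk cj r x -> lin a x <= b) ->
  (forall x, cdisk ck r x -> b <= lin a x) ->
  line a b `&` odisk ci r = set0 ->
  lin (vsub cj ci) (vsub ck ci) <= 0.
Proof.
move=> r0 a0; wlog bi : a b cj ck a0 / b <= lin a ci.
  move=> wlog_bi hj hk hjb hkb hl; have [ib|bi] := lerP b (lin a ci).
    exact: (wlog_bi a b cj ck a0 ib hj hk hjb hkb hl).
  have na0 : vneg a != (0, 0) by apply: contra a0; rewrite !xpair_eqE !oppr_eq0.
  rewrite linC; apply: (wlog_bi (vneg a) (- b)) => //; rewrite ?line_vneg //.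
  - by rewrite lin_vneg lerN2 ltW.
  - by move=> x /hkb; rewrite lin_vneg lerN2.
  - by move=> x /hjb; rewrite lin_vneg lerN2.
move=> hj hk hjb hkb hl.
have lj := disk_below_line a0 hjb; have lk := disk_above_line a0 hkb.
have := line_avoids_disk a0 (ltW r0) hl; rewrite ger0_norm ?subr_ge0 // => li.
set s := Num.sqrt (norm2 a) in lj lk li.
have s0 : 0 < s by rewrite sqrtr_gt0 norm2_gt0.
have sE : s ^+ 2 = norm2 a by rewrite sqr_sqrtr // norm2_ge0.
have hp : lin a (vsub cj ci) <= - 2 * r * s by rewrite lin_vsub; lra.
have lp : lin a (vsub cj ci) = - 2 * r * s.
  apply: (mulfI (lt0r_neq0 s0)); rewrite linC.
  by rewrite (antiparallel_of_extremal _ (ltW r0) s0 sE hj hp) /lin -/(norm2 a) -sE; ring.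
have := antiparallel_of_extremal (vsub ck ci) (ltW r0) s0 sE hj hp.
rewrite !lin_vsub in lp * => e; rewrite -(pmulr_rle0 _ s0) e.
have : 0 <= lin a ck - lin a ci by lra.
nra.
Qed.

Lemma tangent_sym n r (c : 'I_n -> R * R) i j : tangent r c i j -> tangent r c j i.
Proof. by case=> ij [x [h1 h2]]; split; [rewrite eq_sym | exists x]. Qed.

Lemma tangent_dist n r (c : 'I_n -> R * R) i j :
  tangent r c i j -> norm2 (vsub (c j) (c i)) <= (2 * r) ^+ 2.
Proof.
case=> _ [x [hi hj]]; apply: le_trans (norm2_vsub_le _ _ x) _.
have -> : (2 * r) ^+ 2 = 2 * r ^+ 2 + 2 * r ^+ 2 by ring.
by apply: lerD; rewrite ler_pM2l.
Qed.

Lemma packing_inj n r (c : 'I_n -> R * R) : packing r c -> injective c.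
Proof.
case=> r0 hd i j cij; apply/eqP; apply: contraT => /hd dij.
have : (odisk (c i) r `&` odisk (c j) r) (c i).
  by rewrite -cij; split; rewrite odiskE /norm2 /= !subrr expr0n addr0 exprn_gt0.
by rewrite dij.
Qed.

Lemma lin_sqr_le a v : lin a v ^+ 2 <= norm2 a * norm2 v.
Proof.
rewrite -subr_ge0; have -> : norm2 a * norm2 v - lin a v ^+ 2 =
  (a.1 * v.2 - a.2 * v.1) ^+ 2 by rewrite /norm2 /lin; ring.
exact: sqr_ge0.
Qed.

Definition contact n r (c : 'I_n -> R * R) : rel 'I_n :=
  fun i j => `[< tangent r c i j >].

Lemma contact_sym n r (c : 'I_n -> R * R) : symmetric (contact r c).
Proof. by move=> i j; apply/asboolP/asboolP => /tangent_sym. Qed.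

Definition obtuse_nbhds n (c : 'I_n -> R * R) (e : rel 'I_n) :=
  forall i j k, e i j -> e i k -> j != k ->
  lin (vsub (c j) (c i)) (vsub (c k) (c i)) <= 0.

Lemma LS_obtuse n r (c : 'I_n -> R * R) :
  LS_packing r c -> obtuse_nbhds c (contact r c).
Proof.
case=> -[r0 _] hS i j k /asboolP tij /asboolP tik jk.
have [a [b [a0 [hj [hk hl]]]]] := hS i j k (or_intror tij) (or_intror tik) jk.
apply: separated_nbhd_obtuse r0 a0 (tangent_dist tij) (tangent_dist tik) hj hk _.
exact: hl (or_introl erefl).
Qed.

Lemma TS_LS n r (c : 'I_n -> R * R) : TS_packing r c -> LS_packing r c.
Proof.
case=> hp hT; split => // i j k _ _ jk.
have [a [b [a0 [hj [hk hl]]]]] := hT j k I I jk.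
by exists a, b; do 3!split => //; move=> m _; exact: hl.
Qed.

Lemma int_shift_half_sqr (z : int) : 4^-1 <= (z%:~R + 2^-1 : R) ^+ 2.
Proof.
have [z0|z0] := lerP 0 z.
  have zR : (0 : R) <= z%:~R by rewrite ler0z.
  nra.
have : z <= -1 by lia.
by rewrite -(ler_int R) intrN => zR; nra.
Qed.

(* The projections of the centers onto the unit vector [a] are integers, so the
   line [lin a x = lin a (c i) + 1/2] keeps distance [1/2] from every center. *)
Lemma integral_projection_separates n (c : 'I_n -> R * R) a i j :
  norm2 a = 1 -> (forall k, exists z : int, lin a (c k) = z%:~R) ->
  lin a (c i) != lin a (c j) ->
  exists (a' : R * R) (b : R), a' != (0, 0) /\
    (forall x, cdisk (c i) 2^-1 x -> lin a' x <= b) /\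
    (forall x, cdisk (c j) 2^-1 x -> b <= lin a' x) /\
    (forall k, setT k -> line a' b `&` odisk (c k) 2^-1 = set0).
Proof.
wlog lij : a / lin a (c i) < lin a (c j).
  move=> wlog_lij a1 az nij; move: (nij); rewrite neq_lt => /orP[lij|lij].
    exact: (wlog_lij a lij a1 az nij).
  apply: (wlog_lij (vneg a)); rewrite ?norm2_vneg ?lin_vneg ?ltrN2 ?eqr_opp //.
  by move=> k; have [z ez] := az k; exists (- z); rewrite lin_vneg ez intrN.
move=> a1 az _.
have a0 : a != (0, 0).
  apply/eqP => a00; move: a1; rewrite a00 /norm2 expr0n addr0.
  by apply/eqP; rewrite eq_sym oner_eq0.
have proj k x : (lin a x - lin a (c k)) ^+ 2 <= norm2 (vsub x (c k)).
  by rewrite -lin_vsub; have := lin_sqr_le a (vsub x (c k)); rewrite a1 mul1r.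
have [zi ezi] := az i; have [zj ezj] := az j.
have lij1 : lin a (c i) + 1 <= lin a (c j).
  rewrite ezi ezj ltr_int in lij.
  by rewrite ezi ezj -(rmorph1 (intmul 1)) -rmorphD ler_int; lia.
exists a, (lin a (c i) + 2^-1); split=> //; split; [|split].
- by move=> x hx; have := le_trans (proj i x) hx; rewrite sqr_half => h; nra.
- by move=> x hx; have := le_trans (proj j x) hx; rewrite sqr_half => h; nra.
move=> k _; rewrite -subset0 => x [lx hx]; have := le_lt_trans (proj k x) hx.
have [zk ezk] := az k; have := int_shift_half_sqr (zi - zk).
by rewrite sqr_half lx intrB -ezi -ezk addrAC => h /(le_lt_trans h); rewrite ltxx.
Qed.

Lemma Z2_TS n r (c : 'I_n -> R * R) : Z2_packing r c -> TS_packing r c.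
Proof.
case=> -> [hp [cinj cZ]]; split => // i j _ _ ij.
have cij : c i != c j by rewrite (inj_eq cinj).
have [e1|ne1] := eqVneq (c i).1 (c j).1.
- apply: (@integral_projection_separates _ _ (0, 1)).
  + by rewrite /norm2 expr0n expr1n add0r.
  + by move=> k; have [z1 [z2 ->]] := cZ k; exists z2; rewrite /lin /=; ring.
  rewrite /lin /= !mul0r !mul1r !add0r; apply: contra cij => /eqP e2.
  by rewrite [c i]surjective_pairing [c j]surjective_pairing e1 e2.
- apply: (@integral_projection_separates _ _ (1, 0)).
  + by rewrite /norm2 expr0n expr1n addr0.
  + by move=> k; have [z1 [z2 ->]] := cZ k; exists z1; rewrite /lin /=; ring.
  by rewrite /lin /= !mul0r !mul1r !addr0.
Qed.

Lemma tangent_of_dist n r (c : 'I_n -> R * R) i j :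
  i != j -> norm2 (vsub (c j) (c i)) <= (2 * r) ^+ 2 -> tangent r c i j.
Proof.
move=> ij hd; split => //.
pose m := (((c i).1 + (c j).1) / 2, ((c i).2 + (c j).2) / 2).
have r2 : (2 * r) ^+ 2 = 4 * r ^+ 2 by ring.
have mi : norm2 (vsub m (c i)) = norm2 (vsub (c j) (c i)) / 4 by rewrite /norm2 /=; field.
have mj : norm2 (vsub m (c j)) = norm2 (vsub (c j) (c i)) / 4 by rewrite /norm2 /=; field.
by exists m; split; rewrite cdiskE ?mi ?mj; lra.
Qed.

Lemma int_points_Z2 n (c : 'I_n -> R * R) : injective c ->
  (forall i, exists z1 z2 : int, c i = (z1%:~R, z2%:~R)) -> Z2_packing 2^-1 c.
Proof.
move=> cinj cZ; split => //; split; last by [].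
split; first by rewrite invr_gt0.
move=> i j ij; rewrite -subset0 => x [hi hj].
have sq1 (d : int) : d != 0 -> 1 <= (d%:~R : R) ^+ 2.
  by move=> d0; rewrite sqr_intr_ge1 ?intr_int ?intr_eq0.
have far : 1 <= norm2 (vsub (c i) (c j)).
  have [z1 [z2 ei]] := cZ i; have [w1 [w2 ej]] := cZ j.
  have cij : c i != c j by rewrite (inj_eq cinj).
  rewrite ei ej /norm2 /= -!intrB.
  have [e1|ne1] := eqVneq z1 w1.
    rewrite e1 subrr expr0n add0r sq1 // subr_eq0.
    by apply: contra cij => /eqP e2; rewrite ei ej e1 e2.
  by apply: le_trans (sq1 (z1 - w1) _) _; rewrite ?subr_eq0 // lerDl sqr_ge0.
move: hi hj; rewrite !odiskE sqr_half => hi hj.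
have := norm2_vsub_le (c i) (c j) x; lra.
Qed.
End PlaneGeometry.

Section Quadrants.
Variable R : realType.
Implicit Types (b : bool) (u v : R * R).

(* [quadrant false] is the half-open quarter plane [-x <= y < x]; [quadrant true]
   is its rotation by a right angle.  These two quadrants and their opposites
   partition the nonzero vectors. *)
Definition quadrant b v : bool :=
  let w := if b then (v.2, - v.1) else v in
  [&& 0 < w.1, - w.1 <= w.2 & w.2 < w.1].

Definition along b v := quadrant b v || quadrant b (vneg v).

Lemma quadrant_lin b u v : quadrant b u -> quadrant b v -> 0 < lin u v.
Proof.
rewrite /lin /quadrant; case: b u v => -[u1 u2] [v1 v2] /= /and3P[? ? ?] /and3P[? ? ?].
  by have [?|?] := lerP 0 u1; have [?|?] := lerP 0 v1; nra.
by have [?|?] := lerP 0 u2; have [?|?] := lerP 0 v2; nra.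
Qed.

Lemma quadrant_vsub_trans b x y z :
  quadrant b (vsub x y) -> quadrant b (vsub y z) -> quadrant b (vsub x z).
Proof.
rewrite /quadrant; case: b => /= /and3P[? ? ?] /and3P[? ? ?]; apply/and3P; split; lra.
Qed.

Lemma quadrant_vneg b v : quadrant b v -> ~~ quadrant b (vneg v).
Proof.
rewrite /quadrant /vneg; case: b => /= /and3P[? ? ?]; apply/negP => /and3P[? ? ?]; lra.
Qed.

Lemma along_cover v : v != (0, 0) -> along false v || along true v.
Proof.
case: v => x y nz; rewrite /along /quadrant /vneg /= !opprK -!orbA.
have x_nz : y = - x -> x != 0.
  by move=> yx; apply: contra nz => /eqP x0; rewrite yx x0 oppr0.
apply/or4P; case: (ltrP y x) => yx; case: (lerP (- x) y) => xy.
- by constructor 1; apply/and3P; split; lra.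
- by constructor 4; apply/and3P; split; lra.
- have [xy'|yx'] := ltrP (- y) x.
    by constructor 3; apply/and3P; split; lra.
  have /x_nz : y = - x by lra.
  rewrite neq_lt => /orP[xn|xp]; last by exfalso; lra.
  by constructor 2; apply/and3P; split; lra.
- have [xy'|xy'] := eqVneq x y.
    by constructor 4; apply/and3P; split; lra.
  by constructor 2; apply/and3P; split; rewrite ?lt_neqAle ?xy'; lra.
Qed.

Lemma along_disjoint v : along false v -> along true v -> False.
Proof.
rewrite /along /quadrant /vneg /=.
by case/orP => /and3P[? ? ?]; case/orP => /and3P[? ? ?]; lra.
Qed.

End Quadrants.

Section IterateToFixpoint.
Variables (T : finType) (f : T -> T).
Hypothesis f_inj : {in [pred x | f x != x] &, injective f}.

Lemma iter_fixed x k : f x = x -> iter k f x = x.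
Proof. by move=> fx; elim: k => //= k ->. Qed.

Lemma iter_merge_step k x y : f y != y -> f y = iter k f x ->
  (exists j, y = iter j f x) \/ (exists j, x = iter j f y).
Proof.
elim: k x => [|k IH] x fy /= e; first by right; exists 1%N.
have [fk|fk] := eqVneq (f (iter k f x)) (iter k f x).
  by apply: IH => //; rewrite e fk.
by left; exists k; apply: f_inj; rewrite ?inE.
Qed.

Lemma iter_merge a b x y : iter a f x = iter b f y ->
  (exists j, y = iter j f x) \/ (exists j, x = iter j f y).
Proof.
elim: a x => [|a IH] x e; first by right; exists b.
move: e; rewrite iterSr => /IH [[j ->]|[j ej]]; first by left; exists j.+1; rewrite iterSr.
have [fx|fx] := eqVneq (f x) x; first by right; exists j; rewrite -fx.
by have [[j' ->]|[j' ->]] := iter_merge_step fx ej; [right|left]; exists j'.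
Qed.

Variables (d : Order.disp_t) (X : porderType d) (h : T -> X).
Hypothesis h_next : forall x, f x != x -> (h x < h (f x))%O.

Definition terminal x := iter #|T| f x.

Lemma terminal_fixed x : f (terminal x) = terminal x.
Proof.
apply/eqP; apply: contraT => nfix.
have moving k : (k <= #|T|)%N -> f (iter k f x) != iter k f x.
  move=> kT; apply: contra nfix => /eqP fk.
  by rewrite /terminal -(subnK kT) iterD iter_fixed fk.
have incr : {in [pred k | (k <= #|T|)%N] &,
    {homo (fun k => h (iter k f x)) : i j / (i < j)%N >-> (i < j)%O}}.
  apply: homo_ltn_in; first exact: lt_trans.
    by move=> i j _; rewrite !inE => jT k /andP[_ /ltnW kj]; exact: leq_trans kj jT.
  by move=> k _; rewrite inE /= => /ltnW/moving/h_next.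
pose g (k : 'I_#|T|.+1) := iter k f x.
suff /leq_card : injective g by rewrite card_ord ltnn.
have mem (k : 'I_#|T|.+1) : (k : nat) \in [pred k | (k <= #|T|)%N] by rewrite inE -ltnS.
move=> i j gij; apply/val_inj/eqP; apply: contraT; rewrite neq_ltn.
by case/orP => /(incr _ _ (mem _) (mem _)); rewrite /g in gij; rewrite gij ltxx.
Qed.
End IterateToFixpoint.

Lemma le_floor_two_n_minus_sqrt (R : realType) (m a b n : nat) :
  (m + a + b <= 2 * n)%N -> (n <= a * b)%N ->
  m%:Z <= Num.floor (2 * n%:R - 2 * Num.sqrt (n%:R : R)).
Proof.
rewrite -(ler_nat R) -(ler_nat R) !natrD natrM => hm hab.
rewrite floor_ge_int -pmulrn.
have sE : Num.sqrt (n%:R : R) ^+ 2 = n%:R by rewrite sqr_sqrtr.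
have := sqrtr_ge0 (n%:R : R); have := ler0n R a; have := ler0n R b.
have := sqr_ge0 (a%:R - b%:R : R); set s := Num.sqrt _ in sE *.
move=> ab2 b0 a0 s0.
have : (2 * s) ^+ 2 <= (a%:R + b%:R) ^+ 2 by rewrite exprMn sE; nra.
rewrite ler_pXn2r ?nnegrE ?addr_ge0 ?mulr_ge0 //; lra.
Qed.

Section ObtuseGraph.
Variables (R : realType) (n : nat) (c : 'I_n -> R * R) (e : rel 'I_n).
Hypotheses (e_sym : symmetric e) (c_inj : injective c)
  (e_obtuse : obtuse_nbhds c e).
Implicit Types (b : bool) (v w : 'I_n).

Definition next b v := odflt v [pick w | e v w && quadrant b (vsub (c w) (c v))].

Lemma nextP b v : next b v != v ->
  e v (next b v) /\ quadrant b (vsub (c (next b v)) (c v)).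
Proof. by rewrite /next; case: pickP => [w /andP[]|_] //=; rewrite eqxx. Qed.

Lemma next_eq b v w : e v w -> quadrant b (vsub (c w) (c v)) -> next b v = w.
Proof.
move=> evw qw; rewrite /next; case: pickP => [w' /andP[evw' qw']|/(_ w)] /=.
  apply/eqP; apply: contraT => w'w.
  by have := e_obtuse evw' evw w'w; rewrite leNgt (quadrant_lin qw' qw).
by rewrite evw qw.
Qed.

(* Two points with the same successor [w] would see each other from [w] at an
   acute angle. *)
Lemma next_inj b : {in [pred v | next b v != v] &, injective (next b)}.
Proof.
move=> v1 v2; rewrite !inE => /nextP[e1 q1] /nextP[e2 q2] e12.
rewrite e12 in e1 q1; set w := next b v2 in e1 q1 e2 q2.
apply/eqP; apply: contraT => v12.
rewrite e_sym in e1; rewrite e_sym in e2.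
have := e_obtuse e1 e2 v12; rewrite leNgt.
by rewrite (vsubC (c v1)) (vsubC (c v2)) lin_vneg linC lin_vneg opprK (quadrant_lin q2 q1).
Qed.

Definition height b v : R := if b then (c v).2 else (c v).1.

Lemma next_height b v : next b v != v -> height b v < height b (next b v).
Proof.
by case/nextP => _; rewrite /quadrant /height; case: b => /= /and3P[? _ _]; lra.
Qed.

Lemma quadrant_iter_next b v j :
  iter j (next b) v = v \/ quadrant b (vsub (c (iter j (next b) v)) (c v)).
Proof.
elim: j => [|j IH] /=; first by left.
set x := iter j (next b) v in IH *.
have [->|/nextP[_ qx]] := eqVneq (next b x) x; first exact: IH.
by right; case: IH => [xv|]; [rewrite -xv | exact: quadrant_vsub_trans].
Qed.

Lemma terminal_next_along b v v' : terminal (next b) v = terminal (next b) v' ->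
  v = v' \/ along b (vsub (c v') (c v)).
Proof.
case/(iter_merge (@next_inj b)) => -[j ->].
  by case: (quadrant_iter_next b v j) => [->|q]; [left | right; rewrite /along q].
case: (quadrant_iter_next b v' j) => [->|q]; first by left.
by right; rewrite /along -vsubC q orbT.
Qed.

Definition fixed b := [set v | next b v == v].

Lemma card_fixed : (n <= #|fixed false| * #|fixed true|)%N.
Proof.
pose t v := (terminal (next false) v, terminal (next true) v).
have t_inj : injective t.
  move=> v v' [/terminal_next_along[//|a0] /terminal_next_along[//|a1]].
  by case: (along_disjoint a0 a1).
apply: (@leq_trans #|t @: [set: 'I_n]|); first by rewrite card_imset // cardsT card_ord.
rewrite -cardsX; apply/subset_leq_card/fintype.subsetP => _ /imsetP[v _ ->].
by rewrite finset.in_setX !inE (terminal_fixed (@next_height false))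
  (terminal_fixed (@next_height true)) !eqxx.
Qed.

Definition edges := [set p : 'I_n * 'I_n | (p.1 < p.2)%N && e p.1 p.2].
Definition edges_along b := [set p in edges | along b (vsub (c p.2) (c p.1))].

Definition edge_tail b (p : 'I_n * 'I_n) :=
  if quadrant b (vsub (c p.2) (c p.1)) then p.1 else p.2.
Definition ordered_pair v w := if (v < w)%N then (v, w) else (w, v).

Lemma edge_tailP b p : p \in edges_along b ->
  next b (edge_tail b p) != edge_tail b p /\
  ordered_pair (edge_tail b p) (next b (edge_tail b p)) = p.
Proof.
case: p => v w; rewrite !inE /= => /andP[/andP[vw evw] /orP[q|q]].
  rewrite /edge_tail /= q (next_eq evw q) /ordered_pair vw.
  by split; rewrite // neq_ltn vw orbT.
rewrite -vsubC in q; rewrite e_sym in evw.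
have nq : ~~ quadrant b (vsub (c w) (c v)) by rewrite vsubC quadrant_vneg.
rewrite /edge_tail /= (negbTE nq) (next_eq evw q) /ordered_pair ltnNge (ltnW vw).
by split; rewrite // neq_ltn vw.
Qed.

Lemma card_edges_along b : (#|edges_along b| <= n - #|fixed b|)%N.
Proof.
have edge_tail_inj : {in edges_along b &, injective (edge_tail b)}.
  by move=> p q /edge_tailP[_ ep] /edge_tailP[_ eq] tpq; rewrite -ep -eq tpq.
apply: (@leq_trans #|~: fixed b|); last by have := cardsC (fixed b); rewrite card_ord; lia.
rewrite -(card_in_imset edge_tail_inj); apply/subset_leq_card/fintype.subsetP.
by move=> _ /imsetP[p /edge_tailP[moving _] ->]; rewrite !inE.
Qed.

Lemma card_edges : (#|edges| + #|fixed false| + #|fixed true| <= 2 * n)%N.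
Proof.
have cover : edges \subset edges_along false :|: edges_along true.
  apply/fintype.subsetP => p ep; have := ep; rewrite inE => /andP[lt _].
  have nz : vsub (c p.2) (c p.1) != (0, 0).
    by rewrite vsub_eq0 (inj_eq c_inj) neq_ltn lt orbT.
  by case/orP: (along_cover nz) => a; apply/setUP; [left|right]; rewrite inE ep a.
have := leq_trans (subset_leq_card cover) (leq_card_setU _ _).
have := card_edges_along false; have := card_edges_along true.
have := max_card (fixed false); have := max_card (fixed true); rewrite card_ord.
lia.
Qed.

Lemma card_edges_le_floor :
  #|edges|%:Z <= Num.floor (2 * n%:R - 2 * Num.sqrt (n%:R : R)).
Proof. exact: le_floor_two_n_minus_sqrt card_edges card_fixed. Qed.
End ObtuseGraph.

Lemma contact_numberE (R : realType) n r (c : 'I_n -> R * R) :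
  contact_number r c = #|edges (contact r c)|.
Proof. by rewrite /contact_number /edges cardsE. Qed.

Lemma LS_contact_number_le (R : realType) n r (c : 'I_n -> R * R) : LS_packing r c ->
  (contact_number r c)%:Z <= Num.floor (2 * n%:R - 2 * Num.sqrt (n%:R : R)).
Proof.
move=> LS; rewrite contact_numberE.
exact: card_edges_le_floor (contact_sym r c) (packing_inj LS.1) (LS_obtuse LS).
Qed.

Lemma floor_two_n_minus_sqrt_le (R : realType) (n m : nat) :
  (m ^ 2 < 4 * n)%N -> (m < 2 * n)%N ->
  Num.floor (2 * n%:R - 2 * Num.sqrt (n%:R : R)) <= (2 * n - m.+1)%N%:Z.
Proof.
move=> m2 m2n; rewrite -ltzD1 floor_lt_int rmorphD /= -pmulrn natrB // natrM.
rewrite -addn1 natrD.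
suff : (m%:R : R) < 2 * Num.sqrt n%:R by lra.
rewrite -(ltr_pXn2r (n := 2)) ?nnegrE ?mulr_ge0 ?sqrtr_ge0 //.
by rewrite exprMn sqr_sqrtr // -!natrX -natrM ltr_nat.
Qed.

Lemma card_le_of_bounded_inj (T : finType) (A : {pred T}) (f : T -> nat) m :
  {in A &, injective f} -> {in A, forall x, f x < m}%N -> (#|A| <= m)%N.
Proof.
move=> f_inj f_lt; rewrite cardE -(size_map f) -(size_iota 0 m).
apply: uniq_leq_size.
  by rewrite map_inj_in_uniq ?enum_uniq // => x y; rewrite !mem_enum; apply: f_inj.
by move=> y /mapP[x]; rewrite mem_enum => /f_lt fx ->; rewrite mem_iota.
Qed.

Section Grid.
Variables (R : realType) (n w h : nat).
Hypotheses (w2 : (2 <= w)%N) (wn : (w <= n)%N) (nwh : (n <= w * h)%N).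

Definition grid (t : 'I_n) : R * R := ((t %% w)%:R, (t %/ w)%:R).

Lemma grid_inj : injective grid.
Proof.
move=> i j [/eqP + /eqP]; rewrite !eqr_nat => /eqP ei /eqP ej.
by apply/val_inj; rewrite /= (divn_eq i w) (divn_eq j w) ei ej.
Qed.

Lemma grid_Z2 : Z2_packing 2^-1 grid.
Proof.
apply: int_points_Z2 grid_inj _ => t.
by exists (t %% w)%:Z, (t %/ w)%:Z; rewrite -!pmulrn.
Qed.

Definition ord_subn (j : 'I_n) k : 'I_n :=
  Ordinal (leq_ltn_trans (leq_subr k j) (ltn_ord j)).

Lemma grid_edge (i j : 'I_n) : (i < j)%N ->
  (j %% w = (i %% w).+1 /\ j %/ w = i %/ w \/
   j %% w = i %% w /\ j %/ w = (i %/ w).+1)%N ->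
  (i, j) \in edges (contact 2^-1 grid).
Proof.
move=> ij hd; rewrite inE /= ij; apply/asboolP/tangent_of_dist.
  by rewrite neq_ltn ij.
have d : norm2 (vsub (grid j) (grid i)) = 1.
  by rewrite /grid /vsub /norm2 /=; case: hd => -[-> ->]; rewrite -natr1; ring.
by rewrite d mulfV ?expr1n // pnatr_eq0.
Qed.

Lemma grid_horizontal_edge (j : 'I_n) :
  (j %% w != 0)%N -> (ord_subn j 1, j) \in edges (contact 2^-1 grid).
Proof.
move=> jw; have j0 : (0 < j)%N by move: jw; case: (nat_of_ord j) => //; rewrite mod0n.
apply: grid_edge; rewrite /= subn1; first by rewrite prednK.
have w_ndvd_j : ~~ (w %| j)%N by [].
left; rewrite modn_pred ?gtn_eqF // divn_pred (negbTE w_ndvd_j) subn0.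
by rewrite prednK ?lt0n.
Qed.

Lemma grid_vertical_edge (j : 'I_n) :
  (w <= j)%N -> (ord_subn j w, j) \in edges (contact 2^-1 grid).
Proof.
move=> wj; have w0 : (0 < w)%N by apply: leq_trans w2.
apply: grid_edge; rewrite /=; first by rewrite ltn_subrL w0 (leq_trans w0).
have e : j = (1 * w + (j - w))%N :> nat by rewrite mul1n subnKC.
by right; rewrite {1 3}e modnMDl divnMDl.
Qed.

Lemma card_grid_edges : (2 * n - w - h <= #|edges (contact 2^-1 grid)|)%N.
Proof.
set H := [set j : 'I_n | j %% w != 0]%N; set V := [set j : 'I_n | w <= j]%N.
pose hor j := (ord_subn j 1, j); pose ver j := (ord_subn j w, j).
have hor_inj : injective hor by move=> i j [].
have ver_inj : injective ver by move=> i j [].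
have HV : [disjoint hor @: H & ver @: V].
  rewrite disjoint_subset; apply/fintype.subsetP => _ /imsetP[j _ ->].
  rewrite inE; apply/imsetP => -[k]; rewrite inE => wk [e1 jk]; subst k.
  by have := leq_trans w2 wk; lia.
have sub : hor @: H :|: ver @: V \subset edges (contact 2^-1 grid).
  apply/fintype.subsetP => p; rewrite inE => /orP[] /imsetP[j + ->]; rewrite inE.
    exact: grid_horizontal_edge.
  exact: grid_vertical_edge.
have cH : (#|~: H| <= h)%N.
  apply: (@card_le_of_bounded_inj _ _ (fun j : 'I_n => j %/ w)%N) => [i j|j _].
    rewrite !inE !negbK => /eqP i0 /eqP j0 ij.
    by apply/val_inj; rewrite /= (divn_eq i w) (divn_eq j w) i0 j0 ij.
  by rewrite ltn_divLR ?(leq_trans _ w2) // mulnC (leq_trans (ltn_ord j)).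
have cV : (#|~: V| <= w)%N.
  apply: (@card_le_of_bounded_inj _ _ val) => [i j _ _|j]; first exact: val_inj.
  by rewrite !inE -ltnNge.
have cU : #|hor @: H :|: ver @: V| = (#|hor @: H| + #|ver @: V|)%N.
  by apply/eqP; rewrite (leq_card_setU _ _).2.
have := subset_leq_card sub; rewrite cU !card_imset //.
by have := cardsC H; have := cardsC V; rewrite card_ord; lia.
Qed.
End Grid.

Lemma exists_grid_dims n : (1 < n)%N -> exists w h,
  [/\ (2 <= w <= n)%N, (n <= w * h)%N & ((w + h).-1 ^ 2 < 4 * n)%N].
Proof.
move=> n1; have nn : (n <= n * n)%N by rewrite leq_pmull // ltnW.
have [w nww wmin] := ex_minnP (ex_intro (fun w => n <= w * w)%N n nn).
have w1n : ((w.-1) ^ 2 < n)%N by rewrite ltnNge; apply/negP => /wmin; lia.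
have w2 : (2 <= w)%N by move: nww; case: w {wmin w1n} => [|[|]] //; lia.
have wn : (w <= n)%N by apply: wmin.
have [nw|wn'] := leqP n (w * w.-1).
  by exists w, w.-1; split; rewrite ?w2 //; nia.
by exists w, w; split; rewrite ?w2 //; nia.
Qed.

Unset Implicit Arguments.

Theorem corollary1 (R : realType) (n : nat) (hn : (1 < n)%N) :
  let k := Num.floor (2 * n%:R - 2 * Num.sqrt (n%:R : R)) in
  largest_contact (@Z2_packing R n) k /\
  largest_contact (@TS_packing R n) k /\
  largest_contact (@LS_packing R n) k.
Proof.
move=> k; have [w [h [/andP[w2 wn] nwh wh]]] := exists_grid_dims hn.
have ub r (c : 'I_n -> R * R) : LS_packing r c -> (contact_number r c)%:Z <= k.
  exact: LS_contact_number_le.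
pose c : 'I_n -> R * R := grid R w.
have Z2 : Z2_packing 2^-1 c := grid_Z2 R n w.
have TS := Z2_TS Z2; have LS := TS_LS TS.
have c_k : contact_number 2^-1 c = k :> int.
  apply/eqP; rewrite eq_le ub //=.
  have wh0 : (0 < w + h)%N by rewrite addn_gt0 (leq_trans _ w2).
  apply: le_trans (floor_two_n_minus_sqrt_le R wh _) _; first by rewrite prednK; nia.
  by rewrite prednK // lez_nat contact_numberE subnDA; apply: card_grid_edges.
split; [|split]; (split; first by exists 2^-1, c; split).
- by move=> r c' /Z2_TS/TS_LS/ub.
- by move=> r c' /TS_LS/ub.
- exact: ub.
Qed.
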